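(* Assume $d\ge3$. For every $a\in\mathcal K_d$, $$\bigl(B(a)-d\bigr)\bigl(d+2\sqrt{d-1}\bigr)\le A(a)B(a)-d^2,$$ where the right side lies in $[0,\infty]$ (it is $+\infty$, and the inequality strict, if some $a_i=0$). Equality holds if and only if $a=\mathbf 1$ or $a$ is a coordinate permutation of $$a_\star:=\Big(\frac{d\sqrt{d-1}}{\sqrt{d-1}+d-1},\frac{d}{\sqrt{d-1}+d-1},\dots,\frac{d}{\sqrt{d-1}+d-1}\Big).$$
   Context: $\mathcal K_d:=\{a\in\mathbb R_+^d:\sum_{i=1}^d a_i=d\}$. For $a\in\mathcal K_d$, $A(a):=\sum_{i=1}^d 1/a_i\in[d,\infty]$ (with $A(a)=\infty$ if some $a_i=0$) and $B(a):=\sum_{i=1}^d a_i^2$. *)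

From HB Require Import structures.
From mathcomp Require Import all_boot all_order all_algebra.
From mathcomp Require Import perm.
From mathcomp Require Import constructive_ereal.
Set Implicit Arguments. Unset Strict Implicit. Unset Printing Implicit Defensive.
Import Order.TTheory GRing.Theory Num.Theory.
Local Open Scope ring_scope.

Section Defs.
Variable R : realFieldType.

Definition inK (d : nat) (a : 'I_d -> R) : Prop :=
  (forall i, 0 <= a i) /\ \sum_(i < d) a i = d%:R.

Definition Aext (d : nat) (a : 'I_d -> R) : \bar R :=
  if [forall i, a i != 0] then (\sum_(i < d) (a i)^-1)%:E else +oo%E.

Definition Bf (d : nat) (a : 'I_d -> R) : R := \sum_(i < d) a i ^+ 2.

End Defs.

Section Astar.
Variable R : rcfType.
Definition astar (d : nat) (i : 'I_d) : R :=
  let s := Num.sqrt (d%:R - 1) in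
  if val i == 0%N then d%:R * s / (s + d%:R - 1) else d%:R / (s + d%:R - 1).
End Astar.

From HB Require Import structures.
From mathcomp Require Import all_boot all_order all_algebra.
From mathcomp Require Import perm.
From mathcomp Require Import constructive_ereal.
From mathcomp Require Import ring.
Set Implicit Arguments. Unset Strict Implicit. Unset Printing Implicit Defensive.
Import Order.TTheory GRing.Theory Num.Theory.
Local Open Scope ring_scope.

(* Write d = s^2 + 1 with s = sqrt (d - 1), pick a largest coordinate a_k, and
   let p = a_k - 1 >= 0 and u be the mean of the s^2 remaining coordinates.
   The gap between the two sides of the inequality is a rational function of p,
   Q = sum_(i != k) a_i^2, the spread w = sum_(i != k) (a_i - u)^2 and
   S = sum_(i != k) (a_i - u)^2 (a_k - a_i) / (u^2 a_k a_i), namely [sos s p w S Q],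
   all of whose four terms are nonnegative because a_k is maximal.  It vanishes
   exactly when w = 0 and p ((s + 1) p - s (s - 1)) = 0, i.e. when the other
   coordinates all equal u and a_k is either 1 or the spike value of a_star. *)

Definition sos (R : fieldType) (s p w S Q : R) : R :=
  (p * ((s + 1) * p - s * (s - 1))) ^+ 2
      * ((s ^+ 2 + 1) / (s ^+ 2 * (1 + p) * (s ^+ 2 - p)))
  + w * ((s ^+ 2 * ((s + 1) * p - s * (s - 1)) ^+ 2 + 2 * s * p * (s ^+ 2 - p)
          + (s + 1) ^+ 2 * p ^+ 2 * (s ^+ 2 - p)) / ((s ^+ 2 - p) ^+ 2 * (1 + p)))
  + w ^+ 2 * (s ^+ 4 / ((s ^+ 2 - p) ^+ 2 * (1 + p)))
  + S * ((1 + p) ^+ 2 + Q).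

Lemma sos_identity (R : fieldType) (s p u Q Ai w S : R) :
  s != 0 -> 1 + p != 0 -> s ^+ 2 - p != 0 ->
  u = (s ^+ 2 - p) / s ^+ 2 ->
  w = Q - 2 * u * (s ^+ 2 - p) + u ^+ 2 * s ^+ 2 ->
  S = Ai - Q / (u ^+ 2 * (1 + p)) + (u ^- 2 + 2 / (u * (1 + p))) * (s ^+ 2 - p)
        - (2 / u + (1 + p)^-1) * s ^+ 2 ->
  let A := (1 + p)^-1 + Ai in let B := (1 + p) ^+ 2 + Q in let D := s ^+ 2 + 1 in
  A * B - D ^+ 2 - (B - D) * (D + 2 * s) = sos s p w S Q.
Proof. by move=> s0 p0 sp0 -> -> ->; rewrite /sos /=; field; rewrite s0 p0 sp0. Qed.

Lemma sos0 (R : fieldType) (s p Q : R) :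
  p * ((s + 1) * p - s * (s - 1)) = 0 -> sos s p 0 0 Q = 0.
Proof. by rewrite /sos => ->; rewrite expr0n /= !mul0r !addr0. Qed.

Section SosSign.
Variables (R : realFieldType) (s p w S Q : R).
Hypotheses (s_gt0 : 0 < s) (p_ge0 : 0 <= p) (p_lt : p < s ^+ 2).
Hypotheses (w_ge0 : 0 <= w) (S_ge0 : 0 <= S) (Q_ge0 : 0 <= Q).

Let c := (s + 1) * p - s * (s - 1).
Let t1 := (p * c) ^+ 2 * ((s ^+ 2 + 1) / (s ^+ 2 * (1 + p) * (s ^+ 2 - p))).
Let t2 := w * ((s ^+ 2 * c ^+ 2 + 2 * s * p * (s ^+ 2 - p)
          + (s + 1) ^+ 2 * p ^+ 2 * (s ^+ 2 - p)) / ((s ^+ 2 - p) ^+ 2 * (1 + p))).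
Let t3 := w ^+ 2 * (s ^+ 4 / ((s ^+ 2 - p) ^+ 2 * (1 + p))).
Let t4 := S * ((1 + p) ^+ 2 + Q).

Let sosE : sos s p w S Q = t1 + t2 + t3 + t4. Proof. by []. Qed.

Let p1_gt0 : 0 < 1 + p. Proof. by rewrite ltr_wpDr. Qed.
Let sp_gt0 : 0 < s ^+ 2 - p. Proof. by rewrite subr_gt0. Qed.

Let coef1_gt0 : 0 < (s ^+ 2 + 1) / (s ^+ 2 * (1 + p) * (s ^+ 2 - p)).
Proof. by rewrite divr_gt0 ?mulr_gt0 ?exprn_gt0 // ltr_wpDl ?sqr_ge0. Qed.

Let coef3_gt0 : 0 < s ^+ 4 / ((s ^+ 2 - p) ^+ 2 * (1 + p)).
Proof. by rewrite divr_gt0 ?mulr_gt0 ?exprn_gt0. Qed.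

Let t1_ge0 : 0 <= t1. Proof. by rewrite mulr_ge0 ?sqr_ge0 ?ltW. Qed.
Let t3_ge0 : 0 <= t3. Proof. by rewrite mulr_ge0 ?sqr_ge0 ?ltW. Qed.
Let t4_ge0 : 0 <= t4. Proof. by rewrite mulr_ge0 // addr_ge0 ?sqr_ge0. Qed.
Let t2_ge0 : 0 <= t2.
Proof.
have [s_ge0 sp_ge0] : 0 <= s /\ 0 <= s ^+ 2 - p by split; apply: ltW.
rewrite /t2 mulr_ge0 // divr_ge0 ?mulr_ge0 ?sqr_ge0 //; last exact: ltW.
apply: addr_ge0; first apply: addr_ge0.
- exact: mulr_ge0 (sqr_ge0 s) (sqr_ge0 c).
- exact: mulr_ge0 (mulr_ge0 (mulr_ge0 (ler0n _ 2) s_ge0) p_ge0) sp_ge0.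
- exact: mulr_ge0 (mulr_ge0 (sqr_ge0 (s + 1)) (sqr_ge0 p)) sp_ge0.
Qed.

Lemma sos_ge0 : 0 <= sos s p w S Q.
Proof. by rewrite sosE !addr_ge0. Qed.

Lemma sos_eq0 : sos s p w S Q = 0 -> w = 0 /\ p * ((s + 1) * p - s * (s - 1)) = 0.
Proof.
move/eqP; rewrite sosE !paddr_eq0 ?addr_ge0 // => /andP[/andP[/andP[t1_0 _] t3_0] _].
move: t1_0 t3_0; rewrite mulf_eq0 (gt_eqF coef1_gt0) orbF sqrf_eq0 => /eqP pc0.
by rewrite mulf_eq0 (gt_eqF coef3_gt0) orbF sqrf_eq0 => /eqP.
Qed.

End SosSign.

Lemma sumr_quadratic (R : ringType) (I : finType) (P : pred I) (f : I -> R)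
    (c2 c1 c0 : R) :
  \sum_(i | P i) (c2 * f i ^+ 2 + c1 * f i + c0)
  = c2 * \sum_(i | P i) f i ^+ 2 + c1 * \sum_(i | P i) f i + c0 * \sum_(i | P i) 1.
Proof.
rewrite !big_split /= !mulr_sumr.
by under [X in _ = _ + X]eq_bigr do rewrite mulr1.
Qed.

Lemma ord_exists_neq n (k : 'I_n) : (1 < n)%N -> exists j : 'I_n, j != k.
Proof.
move=> n_gt1; have n_gt0 := ltnW n_gt1.
have [->|k_neq0] := eqVneq k (Ordinal n_gt0); last by exists (Ordinal n_gt0); rewrite eq_sym.
by exists (Ordinal n_gt1); rewrite -val_eqE.
Qed.

Definition defect (R : rcfType) (d : nat) (a : 'I_d -> R) : R :=
  (\sum_i (a i)^-1) * Bf a - d%:R ^+ 2 - (Bf a - d%:R) * (d%:R + 2 * Num.sqrt (d%:R - 1)).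

Section Defect.
Variables (R : rcfType) (d : nat) (a : 'I_d -> R).
Hypotheses (d_gt1 : (1 < d)%N) (a_gt0 : forall i, 0 < a i) (sum_a : \sum_i a i = d%:R).

Let s := Num.sqrt (d%:R - 1) : R.

Let s_gt0 : 0 < s. Proof. by rewrite sqrtr_gt0 subr_gt0 ltr1n. Qed.

Let d_eq : d%:R = s ^+ 2 + 1. Proof. by rewrite sqr_sqrtr ?subrK // subr_ge0 ler1n ltnW. Qed.

Let p k := a k - 1.
Let u k := (s ^+ 2 - p k) / s ^+ 2.
Let w k := \sum_(i | i != k) (a i - u k) ^+ 2.
Let S k := \sum_(i | i != k) (a i - u k) ^+ 2 * (a k - a i) / (u k ^+ 2 * a k * a i).
Let Q k := \sum_(i | i != k) a i ^+ 2.

Let ak_eq k : a k = 1 + p k. Proof. by rewrite /p addrC subrK. Qed.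

Let sum_others k : \sum_(i | i != k) a i = s ^+ 2 - p k.
Proof.
have := sum_a; rewrite (bigD1 k) //= d_eq ak_eq => sum_a_k.
by apply: (addrI (1 + p k)); rewrite sum_a_k; ring.
Qed.

Let card_others (k : 'I_d) : \sum_(i | i != k) (1 : R) = s ^+ 2.
Proof.
have : \sum_(i < d) (1 : R) = s ^+ 2 + 1 by rewrite sumr_const card_ord d_eq.
by rewrite (bigD1 k) //= => sum1; apply: (addrI 1); rewrite sum1 addrC.
Qed.

Let p_lt k : p k < s ^+ 2.
Proof.
have [j j_neq_k] := ord_exists_neq k d_gt1.
rewrite -subr_gt0 -sum_others (bigD1 j) //= ltr_wpDr //.
by apply: sumr_ge0 => i _; apply: ltW.
Qed.

Let u_gt0 k : 0 < u k. Proof. by rewrite divr_gt0 ?exprn_gt0 // subr_gt0. Qed.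

Lemma defect_sos k : defect a = sos s (p k) (w k) (S k) (Q k).
Proof.
have [a0 u0] : a k != 0 /\ u k != 0 by split; apply: lt0r_neq0.
rewrite /defect /Bf -/s d_eq (bigD1 k) //= [\sum_i a i ^+ 2](bigD1 k) //= ak_eq.
apply: (sos_identity (u := u k)) => //.
- exact: lt0r_neq0.
- by rewrite -ak_eq.
- by rewrite subr_eq0 eq_sym lt_eqF.
- rewrite /w (eq_bigr (fun i => 1 * a i ^+ 2 + (- (2 * u k)) * a i + u k ^+ 2)).
    by rewrite sumr_quadratic sum_others card_others; ring.
  by move=> i _; ring.
- rewrite /S (eq_bigr (fun i => (a i)^-1 + (- (u k ^+ 2 * a k)^-1 * a i ^+ 2
      + (u k ^- 2 + 2 / (u k * a k)) * a i + - (2 / u k + (a k)^-1)))).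
    by rewrite big_split /= sumr_quadratic sum_others card_others -ak_eq; ring.
  move=> i _; have ai0 : a i != 0 := lt0r_neq0 (a_gt0 i).
  by field; rewrite ai0 a0 u0.
Qed.

Let exists_max : exists k, forall i, a i <= a k.
Proof.
have [k _ k_max] := @arg_maxP _ _ _ (Ordinal (ltnW d_gt1)) xpredT a isT.
by exists k => i; apply: k_max.
Qed.

Let sos_args_ge0 k : (forall i, a i <= a k) ->
  [/\ 0 <= p k, 0 <= w k, 0 <= S k & 0 <= Q k].
Proof.
move=> k_max; split.
- have : \sum_i a i <= \sum_(i < d) a k by apply: ler_sum => i _.
  rewrite sum_a sumr_const card_ord -[a k *+ d]mulr_natl -{1}(mulr1 d%:R).
  by rewrite ler_pM2l ?ltr0n 1?ltnW // subr_ge0.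
- by apply: sumr_ge0 => i _; apply: sqr_ge0.
- apply: sumr_ge0 => i _; apply: divr_ge0.
    by rewrite mulr_ge0 ?sqr_ge0 ?subr_ge0.
  exact: ltW (mulr_gt0 (mulr_gt0 (exprn_gt0 2 (u_gt0 k)) (a_gt0 k)) (a_gt0 i)).
- by apply: sumr_ge0 => i _; apply: sqr_ge0.
Qed.

Lemma defect_ge0 : 0 <= defect a.
Proof.
have [k /sos_args_ge0[p_ge0 w_ge0 S_ge0 Q_ge0]] := exists_max.
by rewrite (defect_sos k) sos_ge0.
Qed.

Let den_eq : s + d%:R - 1 = s * (s + 1). Proof. by rewrite d_eq; ring. Qed.

Let s1_neq0 : s + 1 != 0. Proof. by rewrite lt0r_neq0 // ltr_wpDr. Qed.

Let spike_p k : a k = d%:R * s / (s + d%:R - 1) <-> (s + 1) * p k - s * (s - 1) = 0.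
Proof.
have s_neq0 := lt0r_neq0 s_gt0.
rewrite den_eq d_eq; split=> [ak | c0].
  by rewrite /p ak; field; rewrite s_neq0 s1_neq0.
have -> : a k = 1 + s * (s - 1) / (s + 1).
  rewrite ak_eq; congr (1 + _); apply: (mulIf s1_neq0); rewrite divfK // mulrC.
  by apply/eqP; rewrite -subr_eq0 c0.
by field; rewrite s_neq0 s1_neq0.
Qed.

Let spike_u k : a k = d%:R * s / (s + d%:R - 1) -> u k = d%:R / (s + d%:R - 1).
Proof.
have s_neq0 := lt0r_neq0 s_gt0.
by move=> ak; rewrite /u /p ak den_eq d_eq; field; rewrite s_neq0 s1_neq0.
Qed.

Let defect_eq0_of_spike k : (forall i, i != k -> a i = u k) ->
  p k * ((s + 1) * p k - s * (s - 1)) = 0 -> defect a = 0.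
Proof.
move=> others pc0.
have w0 : w k = 0 by apply: big1 => i ik; rewrite others // subrr expr0n.
have S0 : S k = 0 by apply: big1 => i ik; rewrite others // subrr expr0n !mul0r.
by rewrite (defect_sos k) w0 S0 sos0.
Qed.

Lemma defect_eq0 : defect a = 0 <->
  (forall i, a i = 1) \/ exists k, a k = d%:R * s / (s + d%:R - 1) /\
                                    forall i, i != k -> a i = d%:R / (s + d%:R - 1).
Proof.
have u_one k : p k = 0 -> u k = 1.
  by move=> p0; rewrite /u p0 subr0 divff // expf_neq0 // lt0r_neq0.
split=> [def0 | [ones | [k [ak others]]]].
- have [k k_max] := exists_max; have [p_ge0 w_ge0 S_ge0 Q_ge0] := sos_args_ge0 k_max.
  rewrite (defect_sos k) in def0.
  have [w0 /eqP] := sos_eq0 s_gt0 p_ge0 (p_lt k) w_ge0 S_ge0 Q_ge0 def0.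
  have others_u i : i != k -> a i = u k.
    move=> ik; apply/eqP; rewrite -subr_eq0 -sqrf_eq0; apply/eqP.
    exact: (psumr_eq0P (fun i _ => sqr_ge0 (a i - u k)) w0).
  rewrite mulf_eq0 => /orP[/eqP p0 | /eqP /spike_p ak]; [left | right].
    move=> i; have [-> | ik] := eqVneq i k; first by rewrite ak_eq p0 addr0.
    by rewrite others_u // u_one.
  by exists k; split=> // i ik; rewrite others_u // spike_u.
- have [k _] := exists_max; have p0 : p k = 0 by rewrite /p ones subrr.
  apply: (@defect_eq0_of_spike k); last by rewrite p0 mul0r.
  by move=> i _; rewrite ones u_one.
- apply: (@defect_eq0_of_spike k); last by rewrite (spike_p k).1 // mulr0.
  by move=> i ik; rewrite others // spike_u.
Qed.

End Defect.

Lemma perm_spikeP (T : Type) n (i0 : 'I_n) (x y : T) (a : 'I_n -> T) :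
  (exists k, a k = x /\ forall i, i != k -> a i = y) <->
  exists s : 'S_n, forall i, a i = if s i == i0 then x else y.
Proof.
split=> [[k [ak others]] | [s a_s]].
  exists (tperm k i0) => i; rewrite (canF_eq (tpermK k i0)) tpermR.
  by have [-> | ik] := eqVneq i k; last exact: others.
exists (s^-1 i0)%g; split; first by rewrite a_s permKV eqxx.
by move=> i ik; rewrite a_s (canF_eq (permK s)) (negbTE ik).
Qed.

Lemma Bf_gt0 (R : realFieldType) d (a : 'I_d -> R) : (0 < d)%N -> inK a -> 0 < Bf a.
Proof.
move=> d_gt0 [_ sum_a]; rewrite lt_def sumr_ge0 ?andbT => [|i _]; last exact: sqr_ge0.
apply/eqP => B0; move: sum_a; rewrite big1 => [/eqP | i _].
  by rewrite eq_sym pnatr_eq0 gtn_eqF.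
apply/eqP; rewrite -sqrf_eq0; apply/eqP.
exact: (psumr_eq0P (fun j _ => sqr_ge0 (a j)) B0).
Qed.

Lemma astar_gt0 (R : rcfType) d (i : 'I_d) : (1 < d)%N -> 0 < @astar R d i.
Proof.
move=> d_gt1; rewrite /astar /=; set s := Num.sqrt _.
have s_gt0 : 0 < s by rewrite sqrtr_gt0 subr_gt0 ltr1n.
have den_gt0 : 0 < s + d%:R - 1 by rewrite -addrA addr_gt0 // subr_gt0 ltr1n.
by case: ifP => _; rewrite divr_gt0 ?mulr_gt0 // ltr0n ltnW.
Qed.

Theorem lemma7p2 (R : rcfType) (d : nat) (hd : (3 <= d)%N) (a : 'I_d -> R)
  (ha : inK a) :
  (((Bf a - d%:R) * (d%:R + 2 * Num.sqrt (d%:R - 1)))%:E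
      <= Aext a * (Bf a)%:E - (d%:R ^+ 2)%:E)%E /\
  (((Bf a - d%:R) * (d%:R + 2 * Num.sqrt (d%:R - 1)))%:E
      = (Aext a * (Bf a)%:E - (d%:R ^+ 2)%:E)%E
   <-> ((forall i, a i = 1) \/
        exists s : 'S_d, forall i, a i = @astar R d (s i))).
Proof.
have d_gt1 : (1 < d)%N := ltnW hd.
have B_gt0 := Bf_gt0 (ltnW d_gt1) ha; case: ha => a_ge0 sum_a.
rewrite /Aext; case: ifPn => [/forallP a_neq0 | /forallPn[i0 /negPn /eqP ai0]].
- have a_gt0 i : 0 < a i by rewrite lt_def a_neq0 a_ge0.
  rewrite -EFinM -EFinB lee_fin -subr_ge0; split; first exact: defect_ge0.
  transitivity (defect a = 0).
    split=> [[eq_xy] | def0]; first by rewrite /defect -eq_xy subrr.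
    by congr (_%:E); apply/eqP; rewrite eq_sym -subr_eq0; apply/eqP.
  rewrite defect_eq0 //; apply: or_iff_compat_l.
  exact: perm_spikeP (Ordinal (ltnW d_gt1)) _ _ _.
- rewrite gt0_mulye ?lte_fin // addye //; split=> [|]; first exact: leey.
  split=> // -[ones | [s a_s]].
    by move: (ones i0); rewrite ai0 => /eqP; rewrite eq_sym oner_eq0.
  by move: (astar_gt0 R (s i0) d_gt1); rewrite -a_s ai0 ltxx.
Qed.
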